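(* Let $H=\sum_{a\in\mathcal T}\lambda_aQ_a$ be a Hamiltonian on $n$ qubits, with $Q_a$ Pauli strings, $|\lambda_a|\le1$ and $|\mathrm{supp}(Q_a)|\le k$ for all $a$. Fix an ordering $(a_1,\dots,a_M)$ of $\mathcal T$ ($M=|\mathcal T|$), a step size $\delta>0$, and write $G_m:=e^{\delta\lambda_{a_m}Q_{a_m}}$. For integers $p\ge0$ and $0\le j<M$ let $$U_{\mathrm{right}}^{(p,j)}:=(G_1G_2\cdots G_M)^p\,(G_1\cdots G_j),\qquad U_{\mathrm{left}}^{(p,j)}:=(G_j\cdots G_1)\,(G_M\cdots G_1)^p,$$ and $X_{p,j}:=U_{\mathrm{left}}^{(p,j)}U_{\mathrm{right}}^{(p,j)}$. Let $P\ne\mathbb I$ be a Pauli string with support $R$, $w:=|R|$, $r:=\lceil w/k\rceil$, and let $B:=|\{a\in\mathcal T:\mathrm{supp}(Q_a)\cap R\ne\emptyset\}|$. Set $\beta:=(p+1)\delta$. Then $$2^{-n}\,|\operatorname{Tr}(PX_{p,j})|\le\Big(\frac{2e\beta Be^{\delta}}{r}\Big)^{r}e^{2\beta M}.$$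
   Context: $\mathrm{supp}(Q)$ is the set of qubits on which the Pauli string $Q$ acts non-trivially. *)

From HB Require Import structures.
From mathcomp Require Import all_boot all_order all_algebra.
From mathcomp Require Import complex.
From mathcomp Require Import all_classical all_reals all_analysis.
Set Implicit Arguments. Unset Strict Implicit. Unset Printing Implicit Defensive.
Import Order.TTheory GRing.Theory Num.Theory.
Import numFieldNormedType.Exports.
Local Open Scope ring_scope.
Local Open Scope complex_scope.

Inductive pauli1 := PI | PX | PY | PZ.

Definition is_id (s : pauli1) : bool := if s is PI then true else false.

Definition pauli_string (n : nat) := 'I_n -> pauli1.

Definition supp (n : nat) (P : pauli_string n) : {set 'I_n} :=
  [set q | ~~ is_id (P q)].

(* entry <b1| s |b2> of a single-qubit Pauli matrix, basis |false>=|0>, |true>=|1> *)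
Definition pauli1_entry (R : rcfType) (s : pauli1) (b1 b2 : bool) : R[i] :=
  match s with
  | PI => if b1 == b2 then 1 else 0
  | PX => if b1 == b2 then 0 else 1
  | PY => if b1 == b2 then 0 else if b1 then 'i else - 'i
  | PZ => if b1 == b2 then (if b1 then -1 else 1) else 0
  end.

(* value of qubit q in computational basis index x : bit q of x *)
Definition qbit (x q : nat) : bool := odd (x %/ 2 ^ q).

Definition pauli_mx (R : rcfType) (n : nat) (P : pauli_string n) : 'M[R[i]]_(2 ^ n) :=
  \matrix_(x, y) \prod_(q < n) pauli1_entry R (P q) (qbit x q) (qbit y q).

Definition expm_partial (R : rcfType) (N : nat) (A : 'M[R[i]]_N) (K : nat) : 'M[R[i]]_N :=
  \sum_(k < K) (k`!%:R)^-1 *: A ^+ k.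

Definition expm (R : realType) (N : nat) (A : 'M[R[i]]_N) : 'M[R[i]]_N :=
  \matrix_(x, y) ((limn (fun K : nat => (complex.Re (expm_partial A K x y) : R)))
              +i* (limn (fun K : nat => (complex.Im (expm_partial A K x y) : R)))).

From HB Require Import structures.
From mathcomp Require Import all_boot all_order all_algebra.
From mathcomp Require Import complex.
From mathcomp Require Import all_classical all_reals all_analysis.
From mathcomp Require Import ring lra zify.
Set Implicit Arguments. Unset Strict Implicit. Unset Printing Implicit Defensive.
Import Order.TTheory GRing.Theory Num.Theory.
Import numFieldNormedType.Exports.
Local Open Scope ring_scope.
Local Open Scope complex_scope.

(* Each factor is the exponential of a multiple of an involution, so
   G_m = cosh(c_m) 1 + sinh(c_m) Q_m with c_m = delta lam_m, where
   |cosh c_m| + |sinh c_m| <= e^delta and |sinh c_m| <= delta e^delta.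
   Multiplying P by the factors of X one at a time and expanding, every term is
   P times a product of chosen Q's: a tensor product of single-qubit matrices whose
   rows have l1-norm <= 1, hence of trace at most 2^n, and of trace 0 as long as
   some qubit of supp P still carries P's own traceless Pauli.  A chosen Q_a changes
   at most k qubits of supp P, and only if a is in B, so a nonzero term needs at
   least r = ceil(w/k) chosen factors indexed in B.  This bounds the trace by
   2^n e^(delta |X|) C(N, r) (delta e^delta)^r, where N <= 2(p+1)B counts the
   factors of X indexed in B and |X| <= 2(p+1)M; finally C(N, r) <= (eN/r)^r. *)

Lemma big_nat_double (V : nmodType) (F : nat -> V) m :
  \sum_(0 <= z < (2 * m)%N) F z = \sum_(0 <= z < m) (F (2 * z)%N + F (2 * z).+1).
Proof.
elim: m => [|m IHm]; first by rewrite !big_geq.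
by rewrite mulnS !addSn add0n !big_nat_recr //= IHm addrA.
Qed.

Lemma qbit_double0 (b : bool) z : qbit (b + 2 * z) 0 = b.
Proof. by rewrite /qbit expn0 divn1 oddD oddM addbF; case: b. Qed.

Lemma qbit_doubleS (b : bool) z q : qbit (b + 2 * z) q.+1 = qbit z q.
Proof.
by rewrite /qbit expnS divnMA mulnC divnDMl // (divn_small (_ : b < 2)%N) ?add0n //; case: b.
Qed.

Lemma sum_qbit_prod (T : comPzSemiRingType) n (F : 'I_n -> bool -> T) :
  \sum_(x < 2 ^ n) \prod_(q < n) F q (qbit x q) = \prod_(q < n) (F q false + F q true).
Proof.
elim: n F => [|n IHn] F; first by rewrite big_ord1 !big_ord0.
rewrite big_ord_recl -(IHn (fun q => F (lift ord0 q))) mulrDl !big_distrr /=.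
rewrite -(big_mkord xpredT (fun x => \prod_(q < n.+1) F q (qbit x q))).
rewrite expnS big_nat_double big_split /= !big_mkord.
have split_low (b : bool) z : \prod_(q < n.+1) F q (qbit (b + 2 * z) q) =
    F ord0 b * \prod_(q < n) F (lift ord0 q) (qbit z q).
  by rewrite big_ord_recl qbit_double0; under eq_bigr do rewrite lift0 qbit_doubleS.
by congr (_ + _); apply: eq_bigr => z _; [exact: (split_low false) | exact: (split_low true)].
Qed.

Lemma qbit_inj n x y : (x < 2 ^ n)%N -> (y < 2 ^ n)%N ->
  (forall q, (q < n)%N -> qbit x q = qbit y q) -> x = y.
Proof.
elim: n x y => [|n IHn] x y; first by rewrite !ltnS !leqn0 => /eqP-> /eqP->.
move=> hx hy exy; rewrite (divn_eq x 2) (divn_eq y 2) !modn2.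
have := exy 0%N isT; rewrite /qbit expn0 !divn1 => ->.
congr (_ * _ + _)%N; apply: IHn; try by rewrite ltn_divLR // -expnSr.
by move=> q ltqn; have := exy q.+1 ltqn; rewrite /qbit expnS !divnMA.
Qed.

Section QubitTensor.
Variable R : rcfType.
Local Notation C := R[i].
Local Notation pe := (pauli1_entry R).

(* A single-qubit operator, as the function of its matrix entries [<b1|A|b2>]. *)
Definition qop := bool -> bool -> C.

Definition qop_mul (A B : qop) : qop :=
  fun b1 b2 => A b1 false * B false b2 + A b1 true * B true b2.

Definition qop_tr (A : qop) := A false false + A true true.

Definition tensor_mx n (f : 'I_n -> qop) : 'M[C]_(2 ^ n) :=
  \matrix_(x, y) \prod_(q < n) f q (qbit x q) (qbit y q).

Lemma pauli_mxE n (P : pauli_string n) :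
  pauli_mx R P = tensor_mx (fun q => pe (P q)).
Proof. by []. Qed.

Lemma tensor_mxM n (f g : 'I_n -> qop) :
  tensor_mx f * tensor_mx g = tensor_mx (fun q => qop_mul (f q) (g q)).
Proof.
apply/matrixP => x y; rewrite -mulmxE !mxE.
under eq_bigr do rewrite !mxE -big_split /=.
exact: (sum_qbit_prod (fun q b => f q (qbit x q) b * g q b (qbit y q))).
Qed.

Lemma mxtrace_tensor n (f : 'I_n -> qop) :
  \tr (tensor_mx f) = \prod_(q < n) qop_tr (f q).
Proof.
rewrite /mxtrace; under eq_bigr do rewrite mxE.
exact: (sum_qbit_prod (fun q b => f q b b)).
Qed.

Lemma tensor_mx1 n : tensor_mx (fun _ : 'I_n => pe PI) = 1.
Proof.
apply/matrixP => x y; rewrite !mxE.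
have [<-|nxy] := eqVneq x y; first by rewrite big1 // => q _; rewrite /= eqxx.
have [q xyq] : exists q : 'I_n, qbit x q != qbit y q.
  apply/existsP; apply: contraNT nxy; rewrite negb_exists => /forallP exy.
  apply/eqP/val_inj/(qbit_inj (ltn_ord x) (ltn_ord y)) => q ltqn.
  by apply/eqP; have := exy (Ordinal ltqn); rewrite negbK.
by rewrite (bigD1 q) //= (negbTE xyq) mul0r.
Qed.

Lemma pauli1_sq s : qop_mul (pe s) (pe s) = pe PI.
Proof.
apply/funext => b1; apply/funext => b2; rewrite /qop_mul.
by case: s; case: b1; case: b2; rewrite /= ?(mulr0, mul0r, addr0, add0r, mulr1, mulrNN) //;
  rewrite ?(mulrN, mulNr) -expr2 sqr_i opprK.
Qed.

Lemma qop_mulr1 (A : qop) : qop_mul A (pe PI) = A.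
Proof.
apply/funext => b1; apply/funext => b2; rewrite /qop_mul.
by case: b2; rewrite /= ?(mulr0, mulr1, add0r, addr0).
Qed.

Lemma qop_tr_pauli1 s : ~~ is_id s -> qop_tr (pe s) = 0.
Proof. by case: s => // _; rewrite /qop_tr /= ?addr0 ?addrN. Qed.

Lemma pauli_mx_sq n (P : pauli_string n) : pauli_mx R P * pauli_mx R P = 1.
Proof.
rewrite pauli_mxE tensor_mxM -(tensor_mx1 n); congr tensor_mx.
by apply/funext => q; exact: pauli1_sq.
Qed.

Definition row_contractive (A : qop) := forall b, `|A b false| + `|A b true| <= 1.

Lemma row_contractive_mul A B :
  row_contractive A -> row_contractive B -> row_contractive (qop_mul A B).
Proof.
move=> hA hB b; rewrite /qop_mul.
apply: le_trans (lerD (ler_normD _ _) (ler_normD _ _)) _; rewrite !normrM.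
have -> : `|A b false| * `|B false false| + `|A b true| * `|B true false| +
    (`|A b false| * `|B false true| + `|A b true| * `|B true true|) =
    `|A b false| * (`|B false false| + `|B false true|) +
    `|A b true| * (`|B true false| + `|B true true|) by ring.
by apply: le_trans (hA b); apply: lerD; rewrite ler_piMr.
Qed.

Lemma row_contractive_pauli1 s : row_contractive (pe s).
Proof.
have normi : `|'i| = 1 :> C by rewrite complexiE normCi.
by case: s => -[]; rewrite /= ?(normr0, normr1, normrN, normi, add0r, addr0).
Qed.

Lemma norm_qop_tr_le A : row_contractive A -> `|qop_tr A| <= 2.
Proof.
move=> hA; apply: le_trans (ler_normD _ _) _.
have le1_ff : `|A false false| <= 1 by apply: le_trans (hA false); rewrite lerDl.
have le1_tt : `|A true true| <= 1 by apply: le_trans (hA true); rewrite lerDr.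
exact: lerD le1_ff le1_tt.
Qed.

Lemma norm_trace_tensor_le n (f : 'I_n -> qop) :
  (forall q, row_contractive (f q)) -> `|\tr (tensor_mx f)| <= 2 ^+ n.
Proof.
move=> f_contr; rewrite mxtrace_tensor normr_prod -[in leRHS](card_ord n) -prodr_const.
by apply: ler_prod => q _; rewrite normr_ge0 norm_qop_tr_le.
Qed.

End QubitTensor.

Section Hyperbolic.
Variable R : realType.

Definition coshR (x : R) := (expR x + expR (- x)) / 2.
Definition sinhR (x : R) := (expR x - expR (- x)) / 2.

Lemma coshRN (x : R) : coshR (- x) = coshR x.
Proof. by rewrite /coshR opprK addrC. Qed.

Lemma sinhRN (x : R) : sinhR (- x) = - sinhR x.
Proof. rewrite /sinhR opprK; lra. Qed.

Lemma coshR_gt0 (x : R) : 0 < coshR x.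
Proof. by rewrite /coshR divr_gt0 // addr_gt0 // expR_gt0. Qed.

Lemma coshRD_sinhR (x : R) : coshR x + sinhR x = expR x.
Proof. rewrite /coshR /sinhR; lra. Qed.

Lemma sinhR_ge0 (x : R) : 0 <= x -> 0 <= sinhR x.
Proof. by move=> x_ge0; rewrite /sinhR divr_ge0 // subr_ge0 ler_expR; lra. Qed.

(* From [1 - 2x <= e^(-2x)], i.e. [e^x (1 - 2x) <= e^(-x)]. *)
Lemma sinhR_le (x : R) : 0 <= x -> sinhR x <= x * expR x.
Proof.
move=> x_ge0; have := expR_ge1Dx (- (2 * x)).
have -> : expR (- (2 * x)) = expR (- x) / expR x.
  by rewrite -expRN -expRD; congr expR; lra.
rewrite ler_pdivlMr ?expR_gt0 // /sinhR; have := expR_gt0 x; nra.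
Qed.

Lemma coshR_norm (x : R) : coshR `|x| = coshR x.
Proof. by have [/ger0_norm|/ltr0_norm] := lerP 0 x => ->; rewrite ?coshRN. Qed.

Lemma norm_sinhR (x : R) : `|sinhR x| = sinhR `|x|.
Proof.
have [x_ge0|x_lt0] := lerP 0 x; first by rewrite !ger0_norm ?sinhR_ge0.
have nx_ge0 : 0 <= - x by rewrite oppr_ge0 ltW.
by rewrite (ltr0_norm x_lt0) -[in sinhR x](opprK x) sinhRN normrN ger0_norm ?sinhR_ge0.
Qed.

Lemma norm_coshR_add_sinhR_le (c d : R) :
  `|c| <= d -> `|coshR c| + `|sinhR c| <= expR d.
Proof.
move=> c_le; rewrite gtr0_norm ?coshR_gt0 // norm_sinhR -coshR_norm coshRD_sinhR.
by rewrite ler_expR.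
Qed.

Lemma norm_sinhR_le (c d : R) : `|c| <= d -> `|sinhR c| <= d * expR d.
Proof.
move=> c_le; rewrite norm_sinhR; apply: le_trans (sinhR_le (normr_ge0 c)) _.
by apply: ler_pM; rewrite ?normr_ge0 ?expR_ge0 ?ler_expR.
Qed.

End Hyperbolic.

Section InvolutionExponential.
Variable R : realType.
Local Notation C := R[i].

Lemma exprZ_involution N (A : 'M[C]_N) (a : C) k :
  A * A = 1 -> (a *: A) ^+ k = a ^+ k *: (if odd k then A else 1).
Proof.
move=> AA; elim: k => [|k IHk]; first by rewrite !expr0 scale1r.
rewrite !exprS IHk -mulmxE -scalemxAl -scalemxAr scalerA mulmxE /=.
by case: (odd k); rewrite ?AA ?mulr1.
Qed.

Lemma expm_combination N (A U V : 'M[C]_N) (a b : R^nat) (alpha beta : R) :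
  (a @ \oo --> alpha)%classic -> (b @ \oo --> beta)%classic ->
  (forall K, expm_partial A K = (a K)%:C *: U + (b K)%:C *: V) ->
  expm A = alpha%:C *: U + beta%:C *: V.
Proof.
move=> a_cvg b_cvg eA; apply/matrixP => x y; rewrite !mxE.
have lim_linear (f : C -> R) :
    (forall (s t : R) z w, f (s%:C * z + t%:C * w) = s * f z + t * f w) ->
    limn (fun K => f (expm_partial A K x y)) = f (alpha%:C * U x y + beta%:C * V x y).
  move=> f_lin; under [fun K => _]funext do rewrite eA !mxE f_lin.
  by rewrite f_lin; apply: cvg_lim => //; apply: cvgD; exact: cvgM (cvg_cst _).
rewrite !lim_linear; first by case: (alpha%:C * U x y + beta%:C * V x y).
- by move=> s t [z1 z2] [w1 w2] /=; rewrite !mul0r !addr0.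
- by move=> s t [z1 z2] [w1 w2] /=; rewrite !mul0r !subr0.
Qed.

Lemma expm_involution N (A : 'M[C]_N) (c : R) : A * A = 1 ->
  expm (c%:C *: A) = (coshR c)%:C *: (1 : 'M[C]_N) + (sinhR c)%:C *: A.
Proof.
move=> AA; pose S (x : R) := series (exp_coeff x).
apply: (expm_combination (a := fun K => (S c K + S (- c) K) / 2)
                         (b := fun K => (S c K - S (- c) K) / 2)).
- by apply: (cvgM _ (cvg_cst _)); apply: cvgD; exact: is_cvg_series_exp_coeff.
- by apply: (cvgM _ (cvg_cst _)); apply: cvgB; exact: is_cvg_series_exp_coeff.
move=> K; rewrite /expm_partial /S /series /= -sumrB -big_split /= !mulr_suml.
rewrite !rmorph_sum !scaler_suml -big_split /= big_mkord; apply: eq_bigr => k _.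
rewrite (exprZ_involution _ _ AA) scalerA /exp_coeff /= exprNn -signr_odd -mulrA.
set t := c ^+ k / k`!%:R.
have -> : k`!%:R^-1 * c%:C ^+ k = t%:C by rewrite rmorphM rmorphXn fmorphV rmorph_nat mulrC.
case: (odd k); rewrite /= ?expr0 ?expr1 ?mul1r ?mulN1r.
- have [-> ->] : (t + - t) / 2 = 0 /\ (t - - t) / 2 = t by split; lra.
  by rewrite scale0r add0r.
- have [-> ->] : (t + t) / 2 = t /\ (t - t) / 2 = 0 by split; lra.
  by rewrite scale0r addr0.
Qed.

End InvolutionExponential.

Section BinomialWeight.
Variable R : realFieldType.

Definition binomial_weight (s : R) N d := ('C(N, d))%:R * s ^+ d.

Lemma binomial_weight_ge0 (s : R) N d : 0 <= s -> 0 <= binomial_weight s N d.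
Proof. by move=> s_ge0; rewrite mulr_ge0 ?exprn_ge0. Qed.

(* Pascal's rule [C(N+1, d) = C(N, d) + C(N, d-1)] absorbs the extra factor. *)
Lemma binomial_weight_step (s E a c : R) N d (b : bool) :
  0 <= s -> 1 <= E -> `|a| + `|c| <= E -> `|c| <= s ->
  `|a| * binomial_weight s N d + `|c| * binomial_weight s N (d - b)
    <= E * binomial_weight s (N + b) d.
Proof.
move=> s_ge0 E_ge1 ac_le c_le.
have a_le : `|a| <= E by apply: le_trans ac_le; rewrite lerDl.
case: b; last by rewrite subn0 addn0 -mulrDl ler_wpM2r ?binomial_weight_ge0.
rewrite subn1 addn1; case: d => [|d] /=.
  by rewrite /binomial_weight !bin0 !expr0 !mulr1n !mulr1.
rewrite /binomial_weight binS natrD mulrDl mulrDr exprS.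
apply: lerD; first by apply: ler_wpM2r a_le; rewrite mulr_ge0 ?mulr_ge0 ?exprn_ge0.
have ge0 : 0 <= ('C(N, d))%:R * s ^+ d :> R by rewrite mulr_ge0 ?exprn_ge0.
apply: le_trans (ler_wpM2r ge0 c_le) _; rewrite mulrCA -[leLHS]mul1r.
by apply: ler_wpM2r E_ge1; rewrite mulr_ge0 ?mulr_ge0 ?exprn_ge0.
Qed.

End BinomialWeight.

Lemma binomial_weight_le (R : realType) (s : R) N r : (0 < r)%N -> 0 <= s ->
  binomial_weight s N r <= (expR 1 * N%:R * s / r%:R) ^+ r.
Proof.
move=> r_gt0 s_ge0; have fact_gt0 : 0 < (r`!)%:R :> R by rewrite ltr0n fact_gt0.
have bin_le : ('C(N, r))%:R <= (N%:R : R) ^+ r / (r`!)%:R.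
  rewrite ler_pdivlMr // -natrM -natrX ler_nat bin_ffact ffact_prod.
  apply: (@leq_trans (\prod_(i < r) N)); first by apply: leq_prod => i _; rewrite leq_subr.
  by rewrite prod_nat_const card_ord.
have fact_le : (r%:R : R) ^+ r / (r`!)%:R <= expR 1 ^+ r.
  case: r r_gt0 {bin_le fact_gt0} => // r _; rewrite -expRM_natl mulr1.
  by apply: le_trans (expR_ge1Dxn r (ler0n _ _)); rewrite lerDr.
have r_pos : 0 < r%:R :> R by rewrite ltr0n.
have -> : (expR 1 * N%:R * s / r%:R) ^+ r = (N%:R * s) ^+ r * (expR 1 ^+ r / r%:R ^+ r).
  by rewrite !exprMn exprVn; ring.
apply: le_trans (ler_wpM2r (exprn_ge0 _ s_ge0) bin_le) _.
rewrite mulrAC -exprMn ler_wpM2l ?exprn_ge0 ?mulr_ge0 //.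
by rewrite ler_pdivlMr ?exprn_gt0 // mulrC.
Qed.

Lemma norm_real_complex (R : rcfType) (x : R) : `|x%:C| = `|x|%:C.
Proof. by rewrite normc_def /= expr0n addr0 sqrtr_sqr. Qed.

Section PauliWordTrace.
Variables (R : realType) (n M k : nat) (lam : 'I_M -> R) (Q : 'I_M -> pauli_string n).
Variables (delta : R) (P : pauli_string n).
Hypotheses (lam_le1 : forall a, `|lam a| <= 1) (suppQ_le : forall a, (#|supp (Q a)| <= k)%N).
Hypotheses (k_gt0 : (0 < k)%N) (delta_gt0 : 0 < delta).
Local Notation C := R[i].
Local Notation pe := (pauli1_entry R).
Local Notation r := ((#|supp P| + k.-1) %/ k)%N.
Local Notation B := [set a : 'I_M | supp (Q a) :&: supp P != finset.set0].

Definition trotter_factor m : 'M[C]_(2 ^ n) :=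
  (coshR (delta * lam m))%:C *: (1 : 'M[C]_(2 ^ n))
  + (sinhR (delta * lam m))%:C *: pauli_mx R (Q m).

Definition mismatch (f : 'I_n -> qop R) := [set q in supp P | ~~ `[< f q = pe (P q) >]].

(* With [#|mismatch f| <= u * k], at least [r - u] further factors indexed in B are
   needed before the trace can be nonzero. *)
Definition word_bound (L : seq 'I_M) u := 2 ^+ n * expR (delta * (size L)%:R)
  * binomial_weight (delta * expR delta) (count (mem B) L) (r - u).

Lemma word_bound_ge0 L u : 0 <= word_bound L u.
Proof.
by rewrite !mulr_ge0 ?expR_ge0 ?exprn_ge0 ?binomial_weight_ge0 // mulr_ge0 ?expR_ge0 // ltW.
Qed.

Lemma trace_tensor_eq0 f : (#|mismatch f| < #|supp P|)%N -> \tr (tensor_mx f) = 0.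
Proof.
move=> lt_mismatch; have : ~~ (supp P \subset mismatch f).
  by apply: contraTN lt_mismatch => /subset_leq_card; rewrite leqNgt.
case/subsetPn => q Pq mismatch_q.
have fq : f q = pe (P q) by move: mismatch_q; rewrite inE Pq negbK => /asboolP.
by rewrite mxtrace_tensor (bigD1 q) //= fq qop_tr_pauli1 ?mul0r //; move: Pq; rewrite inE.
Qed.

Lemma norm_trace_tensor_le_word_bound f u :
  (forall q, row_contractive (f q)) -> (#|mismatch f| <= u * k)%N ->
  `|\tr (tensor_mx f)| <= (word_bound [::] u)%:C.
Proof.
move=> f_contr mismatch_le; have [r_le_u|u_lt_r] := leqP r u.
  rewrite /word_bound /binomial_weight (eqP (_ : r - u == 0)%N) ?subn_eq0 //.
  by rewrite mulr0 expR0 bin0 expr0 !mulr1 ?mulr1n rmorphXn rmorph_nat norm_trace_tensor_le.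
rewrite trace_tensor_eq0 ?normr0 ?ler0c ?word_bound_ge0 //.
by move: u_lt_r; rewrite leq_divRL // => ?; lia.
Qed.

Lemma tensor_mx_mul_trotter f m :
  tensor_mx f * trotter_factor m =
  (coshR (delta * lam m))%:C *: tensor_mx f
  + (sinhR (delta * lam m))%:C *: tensor_mx (fun q => qop_mul (f q) (pe (Q m q))).
Proof.
by rewrite /trotter_factor mulrDr -!mulmxE -!scalemxAr mulmx1 mulmxE pauli_mxE tensor_mxM.
Qed.

(* The new single-qubit factor is the identity outside supp (Q m). *)
Lemma mismatch_mul_pauli f m u : (#|mismatch f| <= u * k)%N ->
  (#|mismatch (fun q => qop_mul (f q) (pe (Q m q)))| <= (u + (m \in B)) * k)%N.
Proof.
move=> mismatch_le.
have sub : mismatch (fun q => qop_mul (f q) (pe (Q m q)))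
    \subset mismatch f :|: (supp (Q m) :&: supp P).
  apply/fintype.subsetP => q; rewrite /mismatch !inE => /andP[Pq ne].
  case id_q: (is_id (Q m q)); last by rewrite Pq /= orbT.
  have Qmq : Q m q = PI by case: (Q m q) id_q.
  by move: ne; rewrite Qmq qop_mulr1 Pq => ->.
apply: leq_trans (subset_leq_card sub) _.
rewrite cardsU mulnDl; apply: leq_trans (leq_subr _ _) _; apply: leq_add => //.
case: (boolP (m \in B)) => [_|]; last by rewrite inE negbK => /eqP->; rewrite cards0.
by rewrite mul1n; apply: leq_trans (suppQ_le m); apply/subset_leq_card/subsetIl.
Qed.

Lemma norm_trace_word_le L f u :
  (forall q, row_contractive (f q)) -> (#|mismatch f| <= u * k)%N ->
  `|\tr (tensor_mx f * \prod_(m <- L) trotter_factor m)| <= (word_bound L u)%:C.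
Proof.
elim: L f u => [|m L IHL] f u f_contr mismatch_le.
  by rewrite big_nil mulr1; exact: norm_trace_tensor_le_word_bound.
set c := delta * lam m; set f' := fun q => qop_mul (f q) (pe (Q m q)).
have f'_contr q : row_contractive (f' q).
  by apply: row_contractive_mul; [exact: f_contr | exact: row_contractive_pauli1].
have c_le : `|c| <= delta.
  by rewrite /c normrM gtr0_norm // -[leRHS]mulr1; apply: ler_wpM2l; [exact: ltW | exact: lam_le1].
rewrite big_cons mulrA tensor_mx_mul_trotter mulrDl -!mulmxE -!scalemxAl.
rewrite mxtraceD !mxtraceZ !mulmxE; apply: le_trans (ler_normD _ _) _.
rewrite !normrM !norm_real_complex.
have IH1 := IHL f u f_contr mismatch_le.
have IH2 := IHL f' _ f'_contr (mismatch_mul_pauli m mismatch_le).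
apply: le_trans (lerD (ler_wpM2l _ IH1) (ler_wpM2l _ IH2)) _; rewrite ?ler0c //.
rewrite -!rmorphM -rmorphD lecR.
set s := delta * expR delta; set T := 2 ^+ n * expR (delta * (size L)%:R).
have -> : word_bound (m :: L) u
    = T * (expR delta * binomial_weight s (count (mem B) L + (m \in B)) (r - u)).
  by rewrite /word_bound /T /= (mulrS 1 (size L)) mulrDr mulr1 expRD addnC; ring.
rewrite /word_bound -/T -/s subnDA mulrCA [`|sinhR _| * _]mulrCA -mulrDr.
apply: ler_wpM2l; first by rewrite mulr_ge0 ?exprn_ge0 ?expR_ge0.
apply: binomial_weight_step.
- by rewrite mulr_ge0 ?expR_ge0 ?ltW.
- by rewrite -expR0 ler_expR ltW.
- exact: norm_coshR_add_sinhR_le.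
- exact: norm_sinhR_le.
Qed.

Lemma trace_pauli_word_le L :
  (2 ^- n)%:C * `|\tr (pauli_mx R P * \prod_(m <- L) trotter_factor m)|
    <= (expR (delta * (size L)%:R)
        * binomial_weight (delta * expR delta) (count (mem B) L) r)%:C.
Proof.
have mismatch0 : (#|mismatch (fun q => pe (P q))| <= 0 * k)%N.
  rewrite mul0n leqn0 cards_eq0; apply/eqP/setP => q; rewrite !inE.
  by apply/negP => /andP[_ /negP]; apply; exact/asboolP.
have := norm_trace_word_le L (fun q => row_contractive_pauli1 _ (P q)) mismatch0.
rewrite -pauli_mxE => /(ler_wpM2l (_ : 0 <= (2 ^- n)%:C)) /le_trans; apply.
  by rewrite ler0c invr_ge0 exprn_ge0.
by rewrite -rmorphM lecR /word_bound subn0 !mulrA mulVf ?mul1r ?expf_neq0.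
Qed.

Lemma trace_pauli_word_bound L y :
  (0 < r)%N -> (count (mem B) L)%:R * delta <= y ->
  (2 ^- n)%:C * `|\tr (pauli_mx R P * \prod_(m <- L) trotter_factor m)|
    <= ((expR 1 * y * expR delta / r%:R) ^+ r * expR (delta * (size L)%:R))%:C.
Proof.
move=> r_gt0 count_le; apply: le_trans (trace_pauli_word_le L) _.
rewrite lecR mulrC; apply: ler_wpM2r; first exact: expR_ge0.
have s_ge0 : 0 <= delta * expR delta by rewrite mulr_ge0 ?expR_ge0 ?ltW.
have y_ge0 : 0 <= y by apply: le_trans count_le; rewrite mulr_ge0 // ltW.
apply: le_trans (binomial_weight_le _ r_gt0 s_ge0) _.
apply: lerXn2r; rewrite ?nnegrE ?mulr_ge0 ?invr_ge0 ?expR_ge0 ?(ltW delta_gt0) //.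
apply: ler_wpM2r; first by rewrite invr_ge0.
rewrite mulrA; apply: ler_wpM2r; first exact: expR_ge0.
by rewrite -mulrA; apply: ler_wpM2l; first exact: expR_ge0.
Qed.

End PauliWordTrace.

Lemma prod_flatten_nseq (T : pzSemiRingType) (I : Type) (G : I -> T) (s : seq I) p :
  \prod_(m <- flatten (nseq p s)) G m = (\prod_(m <- s) G m) ^+ p.
Proof. by elim: p => [|p IHp]; rewrite ?big_nil ?expr0 //= big_cat IHp exprS. Qed.

Section TrotterWord.
Variables (M j p : nat).

Definition trotter_word : seq 'I_M :=
  [seq m : 'I_M <- rev (enum 'I_M) | (m < j)%N] ++ flatten (nseq p (rev (enum 'I_M)))
  ++ flatten (nseq p (enum 'I_M)) ++ [seq m : 'I_M <- enum 'I_M | (m < j)%N].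

Lemma prod_trotter_word (T : pzSemiRingType) (G : 'I_M -> T) :
  ((\prod_(m <- rev (enum 'I_M) | (m < j)%N) G m) * (\prod_(m <- rev (enum 'I_M)) G m) ^+ p)
  * ((\prod_(m <- enum 'I_M) G m) ^+ p * \prod_(m <- enum 'I_M | (m < j)%N) G m)
  = \prod_(m <- trotter_word) G m.
Proof. by rewrite !big_cat /= !prod_flatten_nseq !big_filter !mulrA. Qed.

Lemma count_trotter_word (a : pred 'I_M) :
  (count a trotter_word <= 2 * p.+1 * count a (enum 'I_M))%N.
Proof.
have le_filter (s : seq 'I_M) : (count a [seq m : 'I_M <- s | (m < j)%N] <= count a s)%N.
  by rewrite count_filter; apply: sub_count => m /andP[].
have := le_filter (enum 'I_M); have := le_filter (rev (enum 'I_M)).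
rewrite !count_cat !count_flatten !map_nseq !sumn_nseq !count_rev; lia.
Qed.

End TrotterWord.

Unset Implicit Arguments.

Theorem mainTheorem14 (R : realType) (n k M : nat)
    (lam : 'I_M -> R) (Q : 'I_M -> pauli_string n)
    (hlam : forall a : 'I_M, `|lam a| <= 1)
    (hQ : forall a : 'I_M, (#|supp (Q a)| <= k)%N)
    (hk : (0 < k)%N)
    (delta : R) (hdelta : 0 < delta)
    (p j : nat) (hj : (j < M)%N)
    (P : pauli_string n) (hP : supp P != finset.set0) :
  let G := fun m : 'I_M => expm ((delta * lam m)%:C *: pauli_mx R (Q m)) in
  let Uright := (\prod_(m <- enum 'I_M) G m) ^+ p
                * \prod_(m <- enum 'I_M | (m < j)%N) G m in
  let Uleft := (\prod_(m <- rev (enum 'I_M) | (m < j)%N) G m)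
                * (\prod_(m <- rev (enum 'I_M)) G m) ^+ p in
  let X := Uleft * Uright in
  let w := #|supp P| in
  let r := ((w + k.-1) %/ k)%N in
  let B := #|[set a : 'I_M | supp (Q a) :&: supp P != finset.set0]| in
  let beta := (p.+1)%:R * delta in
  (2%:R ^- n)%:C * `|\tr (pauli_mx R P * X)|
    <= ((2 * expR 1 * beta * B%:R * expR delta / r%:R) ^+ r
        * expR (2 * beta * M%:R))%:C.
Proof.
cbv zeta; rewrite prod_trotter_word.
have factorE m :
    expm ((delta * lam m)%:C *: pauli_mx R (Q m)) = trotter_factor lam Q delta m.
  by rewrite expm_involution // pauli_mx_sq.
under eq_bigr do rewrite factorE.
set r := (_ %/ k)%N; set Bset := [set a | _]; set beta := _ * delta.
have r_gt0 : (0 < r)%N by rewrite divn_gt0 //; move: hP; rewrite -card_gt0; lia.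
have scale_le N K : (N <= 2 * p.+1 * K)%N -> N%:R * delta <= 2 * beta * K%:R.
  by rewrite -(ler_nat R) !natrM /beta => ?; nra.
have count_le := scale_le _ _ (count_trotter_word j p (mem Bset)).
have size_le := scale_le _ _ (count_trotter_word j p (predT : pred 'I_M)).
rewrite (_ : count (mem Bset) (enum 'I_M) = #|Bset|) in count_le; last first.
  by rewrite enumT cardE /enum_mem size_filter.
rewrite !count_predT size_enum_ord in size_le.
apply: le_trans (trace_pauli_word_bound hlam hQ hk hdelta r_gt0 count_le) _.
rewrite -/r lecR (_ : 2 * expR 1 * beta * _ = expR 1 * (2 * beta * #|Bset|%:R)); last by ring.
apply: ler_wpM2l.
  by rewrite exprn_ge0 // !mulr_ge0 ?expR_ge0 ?invr_ge0 ?ler0n ?(ltW hdelta).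
by rewrite ler_expR mulrC.
Qed.
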